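(* Let $F\subset\mathbb{R}$ be closed and define $f\colon[0,\infty)\to[-\infty,0]$ by $f(\gamma)=-\inf_{a\in F}\ell(\gamma;a)$. If $F\subset(-\infty,0)$, then $f\equiv-\infty$. If $F\cap[0,\infty)\neq\emptyset$, then $f$ is real-valued and continuous on $(0,\infty)$, and $\lim_{\gamma\downarrow0}f(\gamma)=f(0)$, where $f(0)=0$ if $0\in F$ and $f(0)=-\infty$ if $0\notin F$. In any case, $f^{-1}([a,b])$ is closed for all $a,b\in(-\infty,0]$ with $a\le b$.
   Context: For $\gamma\ge0$: $\ell(\gamma;a)=\infty$ for $a<0$, $\ell(\gamma;0)=\gamma$, and $\ell(\gamma;a)=\gamma-a+a\log(a/\gamma)$ for $a>0$ (interpreted as $\infty$ when $\gamma=0$). *)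

From HB Require Import structures.
From mathcomp Require Import all_boot all_order all_algebra.
From mathcomp Require Import all_classical all_reals all_analysis.
Set Implicit Arguments. Unset Strict Implicit. Unset Printing Implicit Defensive.
Import Order.TTheory GRing.Theory Num.Theory.
Import numFieldNormedType.Exports.
Local Open Scope classical_set_scope.
Local Open Scope ring_scope.
Local Open Scope ereal_scope.

Definition ell {R : realType} (g a : R) : \bar R :=
  if (a < 0)%R then +oo
  else if a == 0%R then g%:E
  else if g == 0%R then +oo
  else (g - a + a * ln (a / g))%:E.

Definition fF {R : realType} (F : set R) (g : R) : \bar R :=
  - ereal_inf [set ell g a | a in F].

From HB Require Import structures.
From mathcomp Require Import all_boot all_order all_algebra.
From mathcomp Require Import all_classical all_reals all_analysis.
From mathcomp Require Import lra ring.
Import Order.TTheory GRing.Theory Num.Theory.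
Import numFieldNormedType.Exports.
Local Open Scope classical_set_scope.
Local Open Scope ring_scope.
Set Implicit Arguments. Unset Strict Implicit. Unset Printing Implicit Defensive.

(* For [g > 0] and [a >= 0], [ell g a] is the real number [g - a + a ln (a / g)], which is
   nonnegative because [ln x <= x - 1]; so as soon as [F] meets [[0, +oo[], [fF F g] is minus
   the finite infimum [I g] of these numbers over [F `&` [0, +oo[].  Near-minimisers [a] for [g]
   satisfy [a <= e^2 g + I g + 1], and changing [g] to [g'] moves each term by
   [(g' - g) + a (ln g - ln g')]; together this makes [I] locally Lipschitz on ]0, +oo[.
   At [0]: if [F 0] then [0 <= I g <= ell g 0 = g]; otherwise closedness keeps
   [F `&` [0, +oo[] inside [[d, +oo[] for some [d > 0], whence [I g >= - d + d ln (d / g)].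
   Thus [fF F] is continuous relative to [[0, +oo[] with values in the extended reals, and
   the preimage of a closed interval is closed. *)

Section ln_bounds.
Variable R : realType.

Lemma ln_sub_le (x y : R) : 0 < x -> 0 < y -> ln x - ln y <= (x - y) / y.
Proof.
move=> x0 y0; rewrite -ln_div ?posrE //.
have -> : x / y = 1 + (x - y) / y by rewrite mulrBl divff ?gt_eqF // addrC subrK.
apply: le_ln1Dx; rewrite mulrBl divff ?gt_eqF //; have := divr_gt0 x0 y0; lra.
Qed.

Lemma ln_dist_le (m x y : R) : 0 < m -> m <= x -> m <= y ->
  `|ln x - ln y| <= `|x - y| / m.
Proof.
move=> m0 mx my; have x0 : 0 < x by exact: lt_le_trans m0 mx.
have y0 : 0 < y by exact: lt_le_trans m0 my.
have div_le z : 0 < z -> m <= z -> `|x - y| / z <= `|x - y| / m.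
  by move=> z0 mz; rewrite ler_wpM2l // lef_pV2 ?posrE.
rewrite ler_norml; apply/andP; split.
- rewrite lerNl opprB; apply: le_trans (ln_sub_le y0 x0) _.
  apply: le_trans (div_le _ x0 mx); rewrite ler_pM2r ?invr_gt0 //.
  by rewrite distrC ler_norm.
- apply: le_trans (ln_sub_le x0 y0) _.
  apply: le_trans (div_le _ y0 my); rewrite ler_pM2r ?invr_gt0 //.
  exact: ler_norm.
Qed.

Lemma subr_le_mul_ln_div (a b : R) : 0 <= a -> 0 < b -> a - b <= a * ln (a / b).
Proof.
rewrite le_eqVlt => /orP[/eqP<- b0|a0 b0]; first by rewrite mul0r sub0r oppr_le0 ltW.
have := ln_sub_le b0 a0; rewrite ln_div ?posrE // => h.
have : a * (ln b - ln a) <= a * ((b - a) / a) by rewrite ler_pM2l.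
by rewrite mulrCA divff ?gt_eqF // mulr1; lra.
Qed.
End ln_bounds.

Section poisson_rate.
Variable R : realType.
Implicit Types g a : R.

Definition poisson_rate g a : R := g - a + a * ln (a / g).

Lemma ell_poisson_rate g a : 0 < g -> 0 <= a -> ell g a = (poisson_rate g a)%:E.
Proof.
move=> g0 a0; rewrite /ell /poisson_rate ltNge a0 /=.
have [->|an0] := eqVneq a 0; first by rewrite mul0r subr0 addr0.
by rewrite gt_eqF.
Qed.

Lemma ell_lt0 g a : a < 0 -> ell g a = +oo%E.
Proof. by rewrite /ell => ->. Qed.

Lemma poisson_rate0 g : poisson_rate g 0 = g.
Proof. by rewrite /poisson_rate mul0r subr0 addr0. Qed.

Lemma poisson_rate_ge0 g a : 0 < g -> 0 <= a -> 0 <= poisson_rate g a.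
Proof. by move=> g0 a0; have := subr_le_mul_ln_div a0 g0; rewrite /poisson_rate; lra. Qed.

Lemma le_poisson_rate g a : 0 < g -> 0 <= a -> a <= expR 2 * g + poisson_rate g a.
Proof.
move=> g0 a0; have r0 := poisson_rate_ge0 g0 a0.
have [aK|Ka] := leP a (expR 2 * g); first lra.
have Kg0 : 0 < expR 2 * g by rewrite mulr_gt0 ?expR_gt0.
have a0' : 0 < a by exact: lt_trans Ka.
have ln2 : 2 < ln (a / g).
  by rewrite -[2]expRK ltr_ln ?posrE ?expR_gt0 ?divr_gt0 // ltr_pdivlMr.
have : a * 2 <= a * ln (a / g) by rewrite ler_pM2l // ltW.
rewrite /poisson_rate; lra.
Qed.

Lemma poisson_rate_shift g g' a : 0 < g -> 0 < g' -> 0 <= a ->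
  poisson_rate g' a = poisson_rate g a + (g' - g) + a * (ln g - ln g').
Proof.
move=> g0 g'0; rewrite le_eqVlt => /orP[/eqP<-|a0].
  by rewrite !poisson_rate0 mul0r; lra.
by rewrite /poisson_rate !ln_div ?posrE //; lra.
Qed.

Lemma poisson_rate_ge g d a : 0 < g -> g <= d -> d <= a ->
  - d + d * ln (d / g) <= poisson_rate g a.
Proof.
move=> g0 gd da; have d0 : 0 < d by exact: lt_le_trans g0 gd.
have a0 : 0 < a by exact: lt_le_trans d0 da.
have lnE : ln (a / g) = ln (a / d) + ln (d / g) by rewrite !ln_div ?posrE //; lra.
have := subr_le_mul_ln_div (ltW a0) d0.
have : d * ln (d / g) <= a * ln (d / g).
  by rewrite ler_wpM2r // ln_ge0 // ler_pdivlMr // mul1r.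
rewrite /poisson_rate lnE mulrDr; lra.
Qed.
End poisson_rate.

Section ell_inf.
Variables (R : realType) (F : set R).
Implicit Types g a : R.

Let ell_img g := [set ell g a | a in F].

Lemma ereal_inf_ell_ge0 g : 0 < g -> (0 <= ereal_inf (ell_img g))%E.
Proof.
move=> g0; apply: le_ereal_inf_tmp => _ [a Fa <-].
have [a0|a0] := ltP a 0; first by rewrite ell_lt0.
by rewrite ell_poisson_rate // lee_fin poisson_rate_ge0.
Qed.

Definition ell_inf g : R := fine (ereal_inf (ell_img g)).

Variable c : R.
Hypotheses (Fc : F c) (c0 : 0 <= c).

Lemma ereal_inf_ellE g : 0 < g -> ereal_inf (ell_img g) = (ell_inf g)%:E.
Proof.
move=> g0; apply/esym/fineK/fin_numP; split; apply/negP => /eqP inf_oo.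
  by have := ereal_inf_ell_ge0 g0; rewrite inf_oo.
have : (ereal_inf (ell_img g) <= ell g c)%E by apply: ereal_inf_lbound; exists c.
by rewrite inf_oo ell_poisson_rate.
Qed.

Lemma fFE g : 0 < g -> fF F g = (- ell_inf g)%:E.
Proof. by move=> g0; rewrite /fF ereal_inf_ellE. Qed.

Lemma ell_inf_ge0 g : 0 < g -> 0 <= ell_inf g.
Proof. by move=> g0; have := ereal_inf_ell_ge0 g0; rewrite ereal_inf_ellE. Qed.

Lemma ell_inf_le g a : 0 < g -> F a -> 0 <= a -> ell_inf g <= poisson_rate g a.
Proof.
move=> g0 Fa a0; rewrite -lee_fin -ereal_inf_ellE // -ell_poisson_rate //.
by apply: ereal_inf_lbound; exists a.
Qed.

Lemma ell_inf_adherent g e : 0 < g -> 0 < e ->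
  exists a, [/\ F a, 0 <= a & poisson_rate g a < ell_inf g + e].
Proof.
move=> g0 e0; have inf_fin : ereal_inf (ell_img g) \is a fin_num by rewrite ereal_inf_ellE.
have [_ [a Fa <-]] := lb_ereal_inf_adherent e0 inf_fin.
rewrite ereal_inf_ellE //; have [a0|a0] := ltP a 0; first by rewrite ell_lt0.
by rewrite ell_poisson_rate // -EFinD lte_fin; exists a.
Qed.

Lemma ell_inf_glb g r : 0 < g -> (forall a, F a -> 0 <= a -> r <= poisson_rate g a) ->
  r <= ell_inf g.
Proof.
move=> g0 lb; apply/ler_addgt0Pr => e e0.
have [a [Fa a0 lt_a]] := ell_inf_adherent g0 e0.
by have := lb a Fa a0; lra.
Qed.

Lemma ell_inf_shift_le g g' : 0 < g -> 0 < g' ->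
  ell_inf g' <= ell_inf g + `|g' - g| + (expR 2 * g + ell_inf g + 1) * `|ln g - ln g'|.
Proof.
move=> g0 g'0; apply/ler_addgt0Pr => e e0.
have e10 : 0 < Num.min e 1 by rewrite lt_min e0 ltr01.
have [a [Fa a0 lt_a]] := ell_inf_adherent g0 e10.
have [e1e e11] : Num.min e 1 <= e /\ Num.min e 1 <= 1 by rewrite !ge_min !lexx orbT.
have a_le := le_poisson_rate g0 a0.
have := ell_inf_le g'0 Fa a0; rewrite (poisson_rate_shift g0 g'0 a0) => le_g'.
have : a * (ln g - ln g') <= (expR 2 * g + ell_inf g + 1) * `|ln g - ln g'|.
  apply: le_trans (_ : a * `|ln g - ln g'| <= _).
    by rewrite ler_wpM2l // ler_norm.
  by rewrite ler_wpM2r //; lra.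
have := ler_norm (g' - g); lra.
Qed.

Lemma ell_inf_lipschitz g0 : 0 < g0 -> exists2 C, 0 < C &
  forall g, `|g - g0| <= g0 / 2 -> `|ell_inf g - ell_inf g0| <= C * `|g - g0|.
Proof.
move=> g00; set cg0 := expR 2 * g0 + ell_inf g0 + 1.
set B := expR 2 * (2 * g0) + (ell_inf g0 + g0 / 2 + cg0) + 1.
have K0 : 0 < expR 2 :> R by exact: expR_gt0.
have I0 := ell_inf_ge0 g00.
have [Kg00 Kg20] : 0 < expR 2 * g0 /\ 0 < expR 2 * (2 * g0) by rewrite !mulr_gt0.
have B0 : 0 < B by rewrite /B /cg0; lra.
exists (1 + 2 * B / g0); first by have := divr_gt0 (mulr_gt0 (ltr0Sn _ 1) B0) g00; lra.
move=> g; set D := `|g - g0| => Dle.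
have [g_ge g_le] : g0 / 2 <= g /\ g <= 2 * g0 by move: Dle; rewrite ler_norml; lra.
have g0' : 0 < g by lra.
have L_le : `|ln g - ln g0| <= 2 * D / g0.
  have -> : 2 * D / g0 = D / (g0 / 2) by rewrite invf_div mulrCA mulrA.
  by apply: ln_dist_le; lra.
have L_le1 : 2 * D / g0 <= 1 by rewrite ler_pdivrMr // mul1r; lra.
have up := ell_inf_shift_le g00 g0'.
have lo := ell_inf_shift_le g0' g00.
rewrite -/cg0 -/D (distrC (ln g0)) in up; rewrite distrC -/D in lo.
have Ig0 := ell_inf_ge0 g0'.
have cg0L : cg0 * `|ln g - ln g0| <= B * (2 * D / g0).
  by apply: ler_pM => //; rewrite /B /cg0; lra.
have IgM : ell_inf g <= ell_inf g0 + g0 / 2 + cg0.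
  have : cg0 * `|ln g - ln g0| <= cg0 by apply: ler_piMr; rewrite /cg0; lra.
  lra.
have cgL : (expR 2 * g + ell_inf g + 1) * `|ln g - ln g0| <= B * (2 * D / g0).
  apply: ler_pM => //; first by have := mulr_gt0 K0 g0'; lra.
  have : expR 2 * g <= expR 2 * (2 * g0) by rewrite ler_pM2l.
  rewrite /B; lra.
have -> : (1 + 2 * B / g0) * D = D + B * (2 * D / g0) by field; rewrite gt_eqF.
rewrite ler_norml; apply/andP; split; lra.
Qed.

Lemma ell_inf_continuous g0 : 0 < g0 -> {for g0, continuous ell_inf}.
Proof.
move=> g00; have [C C0 lip] := ell_inf_lipschitz g00.
apply/cvgrPdist_le => e e0; near=> g.
have : `|g0 - g| <= Num.min (g0 / 2) (e / C).
  near: g; apply: cvgr_dist_le; first exact: cvg_id.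
  by rewrite lt_min !divr_gt0.
rewrite distrC le_min => /andP[near_g0 close_g].
rewrite distrC; apply: le_trans (lip g near_g0) _.
by rewrite mulrC -ler_pdivlMr.
Unshelve. all: by end_near.
Qed.

Lemma fF_continuous g0 : 0 < g0 -> {for g0, continuous (fF F)}.
Proof.
move=> g00; have fFE_near : \forall g \near g0, fF F g = (- ell_inf g)%:E.
  by near=> g; apply: fFE; near: g; apply: cvgr_gt; [exact: cvg_id | exact: g00].
rewrite /prop_for /continuous_at [X in _ --> X]fFE //.
apply/fine_cvgP; split; first by apply: filterS fFE_near => g ->.
apply: cvg_trans (cvgN (ell_inf_continuous g00)).
by apply: near_eq_cvg; apply: filterS fFE_near => g /= ->.
Unshelve. all: by end_near.
Qed.

Lemma fF_cvg_right0_mem : F 0 -> fF F g @[g --> 0^'+] --> 0%E.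
Proof.
move=> F0; have fFE_near : \forall g \near 0^'+, fF F g = (- ell_inf g)%:E.
  by near=> g; apply: fFE; near: g; exact: nbhs_right_gt.
apply/fine_cvgP; split; first by apply: filterS fFE_near => g ->.
apply/cvgrPdist_le => e e0; near=> g.
have g0 : 0 < g by near: g; exact: nbhs_right_gt.
rewrite /= fFE //= sub0r !normrN ger0_norm ?ell_inf_ge0 //.
apply: le_trans (ell_inf_le g0 F0 (lexx 0)) _; rewrite poisson_rate0.
by near: g; exact: nbhs_right_le.
Unshelve. all: by end_near.
Qed.

Section away_from0.
Variable d : R.
Hypotheses (d0 : 0 < d) (d_le : forall a, F a -> 0 <= a -> d <= a).

Lemma ell_inf_ge g : 0 < g -> g <= d -> - d + d * ln (d / g) <= ell_inf g.
Proof.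
move=> g0 gd; apply: ell_inf_glb => // a Fa a0.
by apply: poisson_rate_ge => //; exact: d_le.
Qed.

Lemma fF_cvg_right0_notin : fF F g @[g --> 0^'+] --> -oo%E.
Proof.
apply/cvgeNyPle => A; set t := (d - A) / d.
have bd0 : 0 < Num.min d (d * expR (- t)) by rewrite lt_min d0 mulr_gt0 ?expR_gt0.
near=> g.
have g0 : 0 < g by near: g; exact: nbhs_right_gt.
have : g <= Num.min d (d * expR (- t)) by near: g; exact: nbhs_right_le.
rewrite le_min => /andP[gd g_le].
have t_le : t <= ln (d / g).
  rewrite -[t]expRK ler_ln ?posrE ?expR_gt0 ?divr_gt0 // ler_pdivlMr //.
  by rewrite mulrC -ler_pdivlMr ?expR_gt0 // -expRN.
have : d * t <= d * ln (d / g) by rewrite ler_pM2l.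
have -> : d * t = d - A by rewrite /t mulrC -mulrA mulVf ?gt_eqF // mulr1.
have := ell_inf_ge g0 gd; rewrite fFE // lee_fin; lra.
Unshelve. all: by end_near.
Qed.
End away_from0.
End ell_inf.

Lemma closed_notin_dist (R : realType) (A : set R) x : closed A -> ~ A x ->
  exists2 d, 0 < d & forall a, A a -> d <= `|x - a|.
Proof.
move=> A_closed Ax; have : nbhs x (~` A).
  by apply: open_nbhs_nbhs; split => //; exact: closed_openC.
move=> /nbhs_ballP[d /= d0 ballA]; exists d => // a Aa.
by rewrite leNgt; apply/negP => xa; apply: (ballA a).
Qed.

Section fF_special_values.
Variable R : realType.
Implicit Types F : set R.

Lemma fF_Ny F g : (forall a, F a -> a < 0) -> fF F g = -oo%E.
Proof.
move=> F_lt0; rewrite /fF; suff -> : ereal_inf [set ell g a | a in F] = +oo%E by [].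
by apply/ereal_inf_pinfty => _ [a Fa <-]; rewrite ell_lt0 // F_lt0.
Qed.

Lemma fF0_mem F : F 0 -> fF F 0 = 0%E.
Proof.
move=> F0; rewrite /fF; suff -> : ereal_inf [set ell 0 a | a in F] = 0%E by rewrite oppe0.
apply/le_anti/andP; split.
  by apply: ereal_inf_lbound; exists 0 => //; rewrite /ell ltxx eqxx.
apply: le_ereal_inf_tmp => _ [a Fa <-]; rewrite /ell.
by case: ltP => // a0; case: eqP => // _; rewrite eqxx.
Qed.

Lemma fF0_notin F : ~ F 0 -> fF F 0 = -oo%E.
Proof.
move=> F0; rewrite /fF; suff -> : ereal_inf [set ell 0 a | a in F] = +oo%E by [].
apply/ereal_inf_pinfty => _ [a Fa <-]; rewrite /ell.
by case: ltP => // _; case: eqP => [a0|_]; [rewrite a0 in Fa | rewrite eqxx].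
Qed.
End fF_special_values.

Section fF_topology.
Variables (R : realType) (F : set R).
Hypothesis F_closed : closed F.

Lemma fF_cvg_right0 c : F c -> 0 <= c -> fF F g @[g --> 0^'+] --> fF F 0.
Proof.
move=> Fc c0; have [F0|F0] := pselect (F 0).
  by rewrite fF0_mem //; exact: fF_cvg_right0_mem Fc c0 F0.
have [d d0 d_le] := closed_notin_dist F_closed F0.
have d_le' a : F a -> 0 <= a -> d <= a.
  by move=> Fa a0; have := d_le a Fa; rewrite sub0r normrN ger0_norm.
by rewrite fF0_notin //; exact (fF_cvg_right0_notin Fc c0 d0 d_le').
Qed.

Lemma fF_cvg_within_ge0 (x : R) : 0 <= x ->
  fF F g @[g --> within [set g | 0 <= g] (nbhs x)] --> fF F x.
Proof.
move=> x0; have [[c [Fc c0]]|F_neg] := pselect (exists c, F c /\ 0 <= c); last first.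
  have -> : fF F = cst -oo%E.
    apply/funext => g; apply: fF_Ny => a Fa; rewrite ltNge; apply/negP => a0.
    by apply: F_neg; exists a.
  exact: cvg_cst.
move: x0; rewrite le_eqVlt => /orP[/eqP<-|x0].
  by apply: cvg_at_right_within; exact (fF_cvg_right0 Fc c0).
by apply: cvg_within_filter; exact (fF_continuous Fc c0 x0).
Qed.

Lemma closed_fF_preimage (a b : \bar R) :
  closed [set g | 0 <= g /\ (a <= fF F g <= b)%E].
Proof.
set S := [set g | _ /\ _] => x Sx.
have x0 : 0 <= x by apply: closed_ge; apply: closureS Sx => g [].
have S_proper : ProperFilter (within S (nbhs x)) := within_nbhs_proper Sx.
have fF_cvg : fF F g @[g --> within S (nbhs x)] --> fF F x.
  apply: cvg_trans (fF_cvg_within_ge0 x0); apply: cvg_app.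
  by apply: within_subset => g [].
have near_S : \forall g \near within S (nbhs x), S g.
  by rewrite near_withinE; exact: nearW.
split => //; apply/andP; split.
- apply: (closed_cvg _ (@closed_ereal_le_ereal R a) _ _ fF_cvg).
  by apply: filterS near_S => g [_ /andP[]].
- apply: (closed_cvg _ (@closed_ereal_ge_ereal R b) _ _ fF_cvg).
  by apply: filterS near_S => g [_ /andP[]].
Qed.
End fF_topology.

Theorem proposition6 (R : realType) (F : set R) (hF : closed F) :
  (F `<=` `]-oo, 0[ -> forall g : R, 0 <= g -> fF F g = -oo%E) /\
  (F `&` `[0, +oo[ !=set0 ->
     (forall g : R, 0 < g -> fF F g \is a fin_num) /\
     (forall g : R, 0 < g -> {for g, continuous (fF F)}) /\
     (fF F g @[g --> 0^'+] --> fF F 0) /\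
     (F 0 -> fF F 0 = 0%E) /\ (~ F 0 -> fF F 0 = -oo%E)) /\
  (forall a b : R, a <= 0 -> b <= 0 -> a <= b ->
     closed [set g : R | 0 <= g /\ (a%:E <= fF F g <= b%:E)%E]).
Proof.
split.
  move=> F_neg g _; apply: fF_Ny => a /F_neg.
  by rewrite /= in_itv.
split; last by move=> a b _ _ _; exact: closed_fF_preimage.
move=> [c [Fc]]; rewrite /= in_itv /= andbT => c0.
split; first by move=> g g0; rewrite (fFE Fc c0 g0).
split; first by move=> g g0; exact (fF_continuous Fc c0 g0).
split; first exact (fF_cvg_right0 hF Fc c0).
by split; [exact: fF0_mem | exact: fF0_notin].
Qed.
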